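(* There is an absolute constant $\tilde C\in\mathbb{R}^+$ such that the following holds. Fix $\epsilon,\eta\in(0,1/2)$ and $d\ge2$. Let $\mathcal{L}$ be an $r$-dimensional subspace of $\mathbb{C}^{n_1\times\cdots\times n_d}$ spanned by a basis of rank-one tensors $\mathcal{B}=\{\bigcirc_{\ell=1}^d\mathbf{y}^{(\ell)}_k:k\in[r]\}$ (with $\|\mathbf{y}^{(\ell)}_k\|_2=1$) whose modewise coherence satisfies $\mu_{\mathcal{B}}^{d-1}<1/(2r)$. For each $j\in[d]$ draw $\mathbf{A}_j\in\mathbb{C}^{m_j\times n_j}$ with $$m_j\ge\tilde C\cdot r^{2/d}d^2\epsilon^{-2}\ln(2r^2d/\eta)$$ from an $(\eta/d)$-optimal family of JL embedding distributions. Then with probability at least $1-\eta$, $$\big|\|\mathcal{Y}\times_1\mathbf{A}_1\cdots\times_d\mathbf{A}_d\|^2-\|\mathcal{Y}\|^2\big|\le\epsilon\|\mathcal{Y}\|^2\quad\text{for all }\mathcal{Y}\in\mathcal{L}.$$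
   Context: Tensors carry the inner product $\langle\mathcal{X},\mathcal{Y}\rangle=\sum\mathcal{X}_{i_1\dots i_d}\overline{\mathcal{Y}_{i_1\dots i_d}}$ and norm $\|\cdot\|$; $\bigcirc$ is the outer product; $(\mathcal{Z}\times_j\mathbf{U})_{i_1,\dots,\ell,\dots,i_d}=\sum_{i_j}\mathcal{Z}_{i_1,\dots,i_j,\dots,i_d}\mathbf{U}_{\ell,i_j}$. $\mu_{\mathcal{B}}=\max_{\ell\in[d]}\max_{k\ne h}|\langle\mathbf{y}^{(\ell)}_k,\mathbf{y}^{(\ell)}_h\rangle|$. A matrix $\mathbf{A}\in\mathbb{C}^{m\times n}$ is an $\epsilon$-JL embedding of $S$ if $\|\mathbf{A}x\|_2^2=(1+\epsilon_x)\|x\|_2^2$ with $\epsilon_x\in(-\epsilon,\epsilon)$ for all $x\in S$. For $\eta\in(0,1/2)$, a family $\{\mathcal{D}_{(m,n)}\}$ of distributions over $m\times n$ matrices is $\eta$-optimal if there is an absolute $C>0$ such that for all $\epsilon\in(0,1)$, $m<n$, and nonempty $S\subset\mathbb{C}^n$ with $|S|\le\eta\exp(\epsilon^2m/C)$, $\mathbf{A}\sim\mathcal{D}_{(m,n)}$ is an $\epsilon$-JL embedding of $S$ with probability at least $1-\eta$. *)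

From HB Require Import structures.
From mathcomp Require Import all_boot all_order all_algebra.
From mathcomp Require Import all_classical all_reals all_analysis.
From mathcomp Require Import complex.

Set Implicit Arguments.
Unset Strict Implicit.
Unset Printing Implicit Defensive.

Import Order.TTheory GRing.Theory Num.Theory.
Local Open Scope ring_scope.
Local Open Scope classical_set_scope.

(* R[i] is pointed (by 0), so that matrices over it are pointed;, needed for the generated sigma-algebra *)
HB.instance Definition _ (R : realType) := isPointed.Build R[i] 0.

Section Defs.
Variable R : realType.
Local Notation C := R[i].

Definition sqmod (z : C) : R := complex.Re z ^+ 2 + complex.Im z ^+ 2.
Definition cmod (z : C) : R := Num.sqrt (sqmod z).

Definition vdot n (x y : 'cV[C]_n) : C :=
  \sum_(i < n) x i 0 * conjc (y i 0).
Definition vsqnorm n (x : 'cV[C]_n) : R := \sum_(i < n) sqmod (x i 0).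

Definition JL_embedding m n (eps : R) (A : 'M[C]_(m, n)) (S : seq 'cV[C]_n) :=
  forall x, x \in S ->
    exists epsx : R, - eps < epsx < eps /\
      vsqnorm (A *m x) = (1 + epsx) * vsqnorm x.

(* Borel sigma-algebra on C^{m x n}: generated by Re/Im of the entries *)
Definition mx_gen m n : set (set 'M[C]_(m, n)) :=
  [set E | exists (i : 'I_m) (j : 'I_n) (B : set R), measurable B /\
      (E = (fun A : 'M[C]_(m, n) => complex.Re (A i j)) @^-1` B \/
       E = (fun A : 'M[C]_(m, n) => complex.Im (A i j)) @^-1` B)].



Arguments mx_gen : clear implicits.
Local Notation mxT m n := (g_sigma_algebraType (mx_gen m n)).

(* "event E holds with probability at least p" (inner probability) *)
Definition prob_atleast d (T : measurableType d) (P : probability T R)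
    (E : set T) (p : R) :=
  exists F : set T, [/\ measurable F, F `<=` E & (p%:E <= P F)%E].

Definition mx_family := forall m n : nat, probability (mxT m n) R.

(* eta-optimal family, with its absolute constant C0 made explicit *)
Definition eta_optimal (C0 eta : R) (D : mx_family) :=
  forall (eps : R) (m n : nat) (S : seq 'cV[C]_n),
    0 < eps < 1 -> (m < n)%N -> uniq S -> S != [::] ->
    (size S)%:R <= eta * expR (eps ^+ 2 * m%:R / C0) ->
    prob_atleast (D m n) [set A : mxT m n | JL_embedding eps A S] (1 - eta).

Definition midx d (n : 'I_d -> nat) := {dffun forall j : 'I_d, 'I_(n j)}.
Definition tensor d (n : 'I_d -> nat) := midx n -> C.

Definition tsqnorm d (n : 'I_d -> nat) (X : tensor n) : R :=
  \sum_(i : midx n) sqmod (X i).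

Definition outer d (n : 'I_d -> nat) (y : forall l : 'I_d, 'cV[C]_(n l))
  : tensor n := fun i => \prod_(l < d) y l (i l) 0.

(* Y x_1 A_1 x_2 ... x_d A_d  (all d mode products, written out) *)
Definition multi_mode_prod d (n m : 'I_d -> nat) (Y : tensor n)
  (A : forall j : 'I_d, 'M[C]_(m j, n j)) : tensor m :=
  fun l => \sum_(i : midx n) Y i * \prod_(j < d) A j (l j) (i j).

Definition lincomb d (n : 'I_d -> nat) r (T : 'I_r -> tensor n) (c : 'I_r -> C)
  : tensor n := fun i => \sum_(k < r) c k * T k i.

Definition coherence d (n : 'I_d -> nat) r
  (y : 'I_r -> forall l : 'I_d, 'cV[C]_(n l)) : R :=
  \big[Num.max/0]_(l < d) \big[Num.max/0]_(k < r)
     \big[Num.max/0]_(h < r | h != k) cmod (vdot (y k l) (y h l)).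

Definition mutually_independent dO (O : measurableType dO) (P : probability O R)
  d (m n : 'I_d -> nat) (A : forall j : 'I_d, O -> mxT (m j) (n j)) :=
  forall E : forall j : 'I_d, set (mxT (m j) (n j)),
    (forall j, measurable (E j)) ->
    P [set w | forall j, E j (A j w)] = (\prod_(j < d) P (A j @^-1` E j))%E.

End Defs.

Arguments mx_gen : clear implicits.

Notation mxT R m n := (g_sigma_algebraType (mx_gen R m n)).

From HB Require Import structures.
From mathcomp Require Import all_boot all_order all_algebra.
From mathcomp Require Import all_classical all_reals all_analysis.
From mathcomp Require Import complex ring lra.

(* Expanding Y = \sum_k c_k (y_k^(1) o ... o y_k^(d)) gives
   ||Y||^2 = \sum_(k,h) c_k (c_h)^* \prod_l <y_k^(l), y_h^(l)>, and the compressed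
   tensor has the same expansion with A_l y_k^(l) in place of y_k^(l).  By
   polarization, an eps'-JL embedding of the 4 r^2 vectors y_k^(l) + i^t y_h^(l)
   moves every modewise Gram entry by at most 4 eps'.  If each factor moves by at
   most del, a diagonal product moves by at most (1 + del)^d - 1 and an off-diagonal
   one by at most (mu + del)^d - mu^d; for del = eps / (12 d r^(1/d)) the total error
   is at most eps/2 \sum_k |c_k|^2, while the coherence condition r mu^d <= 1/2
   gives ||Y||^2 >= \sum_k |c_k|^2 / 2.  The d modes are embedded independently,
   each failing with probability at most eta/d. *)

Set Implicit Arguments.
Unset Strict Implicit.
Unset Printing Implicit Defensive.

Import Order.TTheory GRing.Theory Num.Theory.
Local Open Scope ring_scope.
Local Open Scope classical_set_scope.
Local Open Scope complex_scope.

Section ComplexModulus.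
Variable R : realType.
Implicit Types z w : R[i].

Lemma normcE z : `|z| = (cmod z)%:C.
Proof. by rewrite normc_def. Qed.

Lemma cmod_ge0 z : 0 <= cmod z.
Proof. exact: sqrtr_ge0. Qed.

Lemma sqmod_cmod z : sqmod z = cmod z ^+ 2.
Proof. by rewrite sqr_sqrtr // addr_ge0 ?sqr_ge0. Qed.

Lemma sqmodC z : (sqmod z)%:C = z * z^*.
Proof. by rewrite sqmod_cmod rmorphXn /= -normcE sqr_normc. Qed.

Lemma cmodM z w : cmod (z * w) = cmod z * cmod w.
Proof. by apply: complexI; rewrite rmorphM /= -!normcE normrM. Qed.

Lemma cmodD z w : cmod (z + w) <= cmod z + cmod w.
Proof. by rewrite -lecR rmorphD /= -!normcE ler_normD. Qed.

Lemma cmodJ z : cmod z^* = cmod z.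
Proof. by apply: complexI; rewrite -!normcE normcJ. Qed.

Lemma cmod_real (x : R) : cmod x%:C = `|x|.
Proof. by rewrite /cmod /sqmod /= expr0n addr0 sqrtr_sqr. Qed.

Lemma cmod_iX t : cmod ('i ^+ t : R[i]) = 1.
Proof.
apply: complexI; rewrite -normcE normrX.
have -> : `|'i : R[i]| = 1 by rewrite normcE /cmod /sqmod /= expr0n expr1n add0r sqrtr1.
by rewrite expr1n.
Qed.

Lemma cmod_sum I (s : seq I) (P : pred I) (F : I -> R[i]) :
  cmod (\sum_(i <- s | P i) F i) <= \sum_(i <- s | P i) cmod (F i).
Proof.
rewrite -lecR rmorph_sum /= -normcE.
under [X in _ <= X]eq_bigr do rewrite -normcE.
exact: ler_norm_sum.
Qed.

Lemma cmod_prod I (s : seq I) (P : pred I) (F : I -> R[i]) :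
  cmod (\prod_(i <- s | P i) F i) = \prod_(i <- s | P i) cmod (F i).
Proof.
apply: complexI; rewrite rmorph_prod /= -normcE normr_prod.
by apply: eq_bigr => i _; rewrite normcE.
Qed.

End ComplexModulus.

Lemma sum_midx_prod (K : comPzSemiRingType) d (n : 'I_d -> nat)
    (F : forall j : 'I_d, 'I_(n j) -> K) :
  \sum_(i : midx n) \prod_(j < d) F j (i j) = \prod_(j < d) \sum_(t < n j) F j t.
Proof.
pose G j := [ffun t : 'I_(n j) => F j t].
rewrite (reindex (@dffun_of_fprod _ (fun j => 'I_(n j)))) /=; last first.
  exact/onW_bij/dffun_of_fprod_bij.
transitivity (\sum_(t : fprod (fun j => 'I_(n j))) \prod_(j < d) G j (t j)).
  by apply: eq_bigr => t _; apply: eq_bigr => j _; rewrite /dffun_of_fprod !ffunE.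
rewrite (big_fprod 1 +%R) -(bigA_distr_big_dep _ (fun j => untag 0 (G j))).
by apply: eq_bigr => j _; rewrite -(big_tag G); apply: eq_bigr => t _; rewrite ffunE.
Qed.

Section Tensors.
Variable R : realType.
Variables (d r : nat) (n m : 'I_d -> nat).

Definition hermitian_form (c : 'I_r -> R[i]) (G : 'I_r -> 'I_r -> R[i]) : R[i] :=
  \sum_(k < r) \sum_(h < r) c k * (c h)^* * G k h.

Lemma multi_mode_prod_lincomb (y : 'I_r -> forall l : 'I_d, 'cV[R[i]]_(n l))
    (c : 'I_r -> R[i]) (A : forall j : 'I_d, 'M[R[i]]_(m j, n j)) :
  multi_mode_prod (lincomb (fun k => outer (y k)) c) A =
  lincomb (fun k => outer (fun j => A j *m y k j)) c.
Proof.
apply: funext => l; rewrite /multi_mode_prod /lincomb /outer.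
under eq_bigr do rewrite mulr_suml.
rewrite exchange_big /=; apply: eq_bigr => k _.
under eq_bigr do rewrite -mulrA -big_split /=.
rewrite -mulr_sumr (sum_midx_prod (fun j t => y k j t 0 * A j (l j) t)).
by congr (_ * _); apply: eq_bigr => j _; rewrite mxE; apply: eq_bigr => t _; rewrite mulrC.
Qed.

Lemma tsqnorm_lincomb (z : 'I_r -> forall l : 'I_d, 'cV[R[i]]_(n l)) (c : 'I_r -> R[i]) :
  (tsqnorm (lincomb (fun k => outer (z k)) c))%:C =
  hermitian_form c (fun k h => \prod_(j < d) vdot (z k j) (z h j)).
Proof.
rewrite /tsqnorm rmorph_sum /=.
under eq_bigr do rewrite sqmodC /lincomb /outer rmorph_sum mulr_suml.
rewrite exchange_big /=; apply: eq_bigr => k _.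
under eq_bigr do rewrite mulr_sumr.
rewrite exchange_big /=; apply: eq_bigr => h _.
under eq_bigr do rewrite rmorphM rmorph_prod /= mulrACA -big_split /=.
by rewrite -mulr_sumr (sum_midx_prod (fun j t => z k j t 0 * (z h j t 0)^*)).
Qed.

End Tensors.

Section Polarization.
Variable R : realType.

Lemma vsqnormC n (u : 'cV[R[i]]_n) : (vsqnorm u)%:C = vdot u u.
Proof. by rewrite rmorph_sum; apply: eq_bigr => i _; exact: sqmodC. Qed.

Lemma vsqnorm_ge0 n (u : 'cV[R[i]]_n) : 0 <= vsqnorm u.
Proof. by apply: sumr_ge0 => i _; rewrite sqmod_cmod sqr_ge0. Qed.

Lemma polarizationC (a b : R[i]) :
  \sum_(t < 4) 'i ^+ t * ((a + 'i ^+ t * b) * (a + 'i ^+ t * b)^*) = 4%:R * (a * b^*).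
Proof.
rewrite !big_ord_recl big_ord0 -(rmorph_nat (real_complex R) 4).
case: a => a1 a2; case: b => b1 b2; rewrite /= !exprS !expr0 !mulr1.
by simpc; congr (_ +i* _); ring.
Qed.

Lemma vdot_polarization n (u v : 'cV[R[i]]_n) :
  \sum_(t < 4) 'i ^+ t * (vsqnorm (u + 'i ^+ t *: v))%:C = 4%:R * vdot u v.
Proof.
under eq_bigr do rewrite vsqnormC /vdot mulr_sumr.
rewrite exchange_big /= mulr_sumr; apply: eq_bigr => x _.
by rewrite -polarizationC; apply: eq_bigr => t _; rewrite !mxE.
Qed.

Lemma vsqnorm_addZ_le n (u v : 'cV[R[i]]_n) (s : R[i]) : cmod s = 1 ->
  vsqnorm (u + s *: v) <= 2 * vsqnorm u + 2 * vsqnorm v.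
Proof.
move=> s1; rewrite /vsqnorm !mulr_sumr -big_split /=; apply: ler_sum => i _.
rewrite !mxE !sqmod_cmod.
have := cmodD (u i 0) (s * v i 0); rewrite cmodM s1 mul1r => tri.
apply: (@le_trans _ _ ((cmod (u i 0) + cmod (v i 0)) ^+ 2)).
  by rewrite lerXn2r // nnegrE ?addr_ge0 ?cmod_ge0.
rewrite -subr_ge0.
have -> : 2 * cmod (u i 0) ^+ 2 + 2 * cmod (v i 0) ^+ 2 - (cmod (u i 0) + cmod (v i 0)) ^+ 2
    = (cmod (u i 0) - cmod (v i 0)) ^+ 2 by ring.
exact: sqr_ge0.
Qed.

Lemma vdot_distortion_le m n (A : 'M[R[i]]_(m, n)) (u v : 'cV[R[i]]_n) (e : R) :
  (forall t : 'I_4, exists ex : R, - e < ex < e /\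
     vsqnorm (A *m (u + 'i ^+ t *: v)) = (1 + ex) * vsqnorm (u + 'i ^+ t *: v)) ->
  vsqnorm u = 1 -> vsqnorm v = 1 ->
  cmod (vdot (A *m u) (A *m v) - vdot u v) <= 4 * e.
Proof.
move=> JL u1 v1.
have term_le (t : 'I_4) :
    `|vsqnorm (A *m (u + 'i ^+ t *: v)) - vsqnorm (u + 'i ^+ t *: v)| <= 4 * e.
  have [ex [/andP [ex_lo ex_hi] ->]] := JL t.
  set w := u + 'i ^+ t *: v.
  have -> : (1 + ex) * vsqnorm w - vsqnorm w = ex * vsqnorm w by ring.
  have w_le := vsqnorm_addZ_le u v (cmod_iX R t); rewrite u1 v1 in w_le.
  have ex_le : `|ex| <= e by rewrite ler_norml; apply/andP; split; lra.
  rewrite normrM (ger0_norm (vsqnorm_ge0 w)).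
  have := ler_pM (normr_ge0 ex) (vsqnorm_ge0 w) ex_le w_le; lra.
have polar : 4%:R * (vdot (A *m u) (A *m v) - vdot u v) =
    \sum_(t < 4) 'i ^+ t * (vsqnorm (A *m (u + 'i ^+ t *: v)) - vsqnorm (u + 'i ^+ t *: v))%:C.
  rewrite mulrBr -!vdot_polarization -sumrB; apply: eq_bigr => t _.
  by rewrite rmorphB /= mulrBr mulmxDr scalemxAr.
have : cmod (4%:R * (vdot (A *m u) (A *m v) - vdot u v)) <= 4 * (4 * e).
  rewrite polar; apply: le_trans (cmod_sum _ _ _) _.
  have -> : 4 * (4 * e) = \sum_(t < 4) (4 * e) by rewrite sumr_const card_ord; lra.
  by apply: ler_sum => t _; rewrite cmodM cmod_iX mul1r cmod_real.
rewrite cmodM -(rmorph_nat (real_complex R) 4) cmod_real ger0_norm //.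
have := cmod_ge0 (vdot (A *m u) (A *m v) - vdot u v); lra.
Qed.

End Polarization.

Section GramPerturbation.
Variable R : realType.

Lemma cmod_prod_le I (s : seq I) (a : I -> R[i]) (b : I -> R) :
  (forall j, cmod (a j) <= b j) -> cmod (\prod_(j <- s) a j) <= \prod_(j <- s) b j.
Proof. by move=> ab; rewrite cmod_prod; apply: ler_prod => j _; rewrite cmod_ge0 ab. Qed.

Lemma cmod_prod_sub_le I (s : seq I) (a g : I -> R[i]) (b : I -> R) (del : R) :
  (forall j, cmod (g j) <= b j) -> (forall j, cmod (a j - g j) <= del) ->
  cmod (\prod_(j <- s) a j - \prod_(j <- s) g j) <=
    \prod_(j <- s) (b j + del) - \prod_(j <- s) b j.
Proof.
move=> gb agdel; elim: s => [|x s IH]; first by rewrite !big_nil subrr cmod_real normr0.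
have ab j : cmod (a j) <= b j + del.
  by rewrite -(subrK (g j) (a j)); apply: le_trans (cmodD _ _) _; rewrite addrC lerD.
rewrite !big_cons.
have -> : a x * \prod_(j <- s) a j - g x * \prod_(j <- s) g j =
    (a x - g x) * \prod_(j <- s) a j + g x * (\prod_(j <- s) a j - \prod_(j <- s) g j).
  by ring.
apply: le_trans (cmodD _ _) _; rewrite !cmodM.
have := ler_pM (cmod_ge0 _) (cmod_ge0 _) (agdel x) (cmod_prod_le s ab).
have := ler_pM (cmod_ge0 _) (cmod_ge0 _) (gb x) IH.
lra.
Qed.

Lemma sum_mul_le_sum_sqr (r : nat) (x : 'I_r -> R) :
  \sum_(k < r) \sum_(h < r) x k * x h <= r%:R * \sum_(k < r) x k ^+ 2.
Proof.
apply: (@le_trans _ _ (\sum_(k < r) \sum_(h < r) (x k ^+ 2 + x h ^+ 2) / 2)).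
  by do 2!apply: ler_sum => ? _; exact: (leif_mean_square _ _).1.
under eq_bigr do rewrite -mulr_suml big_split /= sumr_const card_ord.
rewrite -mulr_suml big_split /= sumr_const card_ord sumrMnl -mulr_natl; lra.
Qed.

Variable r : nat.
Implicit Types c : 'I_r -> R[i].

Definition coef_sqnorm c : R := \sum_(k < r) cmod (c k) ^+ 2.

Lemma coef_sqnorm_ge0 c : 0 <= coef_sqnorm c.
Proof. by apply: sumr_ge0 => k _; apply: sqr_ge0. Qed.

Lemma hermitian_form_delta c :
  hermitian_form c (fun k h => (k == h)%:R) = (coef_sqnorm c)%:C.
Proof.
rewrite rmorph_sum; apply: eq_bigr => k _.
rewrite (bigD1 k) //= eqxx mulr1 big1 ?addr0 -?sqmodC ?sqmod_cmod //.
by move=> h /negbTE; rewrite eq_sym => ->; rewrite mulr0.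
Qed.

Lemma hermitian_form_sub_le c (G1 G2 : 'I_r -> 'I_r -> R[i]) (ed eo : R) :
  0 <= eo -> (forall k h, cmod (G1 k h - G2 k h) <= (k == h)%:R * ed + eo) ->
  cmod (hermitian_form c G1 - hermitian_form c G2) <= (ed + r%:R * eo) * coef_sqnorm c.
Proof.
move=> eo_ge0 G12.
apply: (@le_trans _ _ (\sum_(k < r) \sum_(h < r)
    cmod (c k) * cmod (c h) * ((k == h)%:R * ed + eo))).
  rewrite -sumrB; apply: le_trans (cmod_sum _ _ _) _; apply: ler_sum => k _.
  rewrite -sumrB; apply: le_trans (cmod_sum _ _ _) _; apply: ler_sum => h _.
  rewrite -mulrBr !cmodM cmodJ; apply: ler_wpM2l (G12 k h).
  by rewrite mulr_ge0 ?cmod_ge0.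
have -> : \sum_(k < r) \sum_(h < r) cmod (c k) * cmod (c h) * ((k == h)%:R * ed + eo) =
    ed * coef_sqnorm c + eo * \sum_(k < r) \sum_(h < r) cmod (c k) * cmod (c h).
  rewrite /coef_sqnorm !mulr_sumr -big_split; apply: eq_bigr => k _ /=.
  under eq_bigr => h _ do rewrite mulrDr mulrCA.
  rewrite big_split /= mulr_sumr; congr (_ + _); last by apply: eq_bigr => h _; rewrite mulrC.
  rewrite (bigD1 k) //= eqxx mul1r big1 ?addr0 => [|h /negbTE]; first by rewrite expr2 mulrC.
  by rewrite eq_sym => ->; rewrite mul0r.
rewrite mulrDl lerD2l mulrAC [X in _ <= X]mulrC ler_wpM2l //.
exact: (sum_mul_le_sum_sqr (fun k => cmod (c k))).
Qed.

End GramPerturbation.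

Section GramProduct.
Variable R : realType.

Lemma exprDn_sub_ge0 (x y : R) k : 0 <= x -> 0 <= y -> 0 <= (x + y) ^+ k - x ^+ k.
Proof. by move=> x0 y0; rewrite subr_ge0 lerXn2r ?nnegrE ?addr_ge0 // lerDl. Qed.

Variables (d r : nat) (a g : 'I_d -> 'I_r -> 'I_r -> R[i]) (del mu : R).
Hypotheses (del_ge0 : 0 <= del) (mu_ge0 : 0 <= mu).
Hypotheses (g_diag : forall j k, g j k k = 1)
  (g_offdiag : forall j k h, k != h -> cmod (g j k h) <= mu).

Lemma gram_prod_sub_le k h : (forall j, cmod (a j k h - g j k h) <= del) ->
  cmod (\prod_(j < d) a j k h - \prod_(j < d) g j k h) <=
    (k == h)%:R * ((1 + del) ^+ d - 1) + ((mu + del) ^+ d - mu ^+ d).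
Proof.
case: (eqVneq k h) => [<-|nkh] ag; rewrite ?mul1r ?mul0r ?add0r.
- apply: le_trans (cmod_prod_sub_le (a := a^~ k ^~ k) (g := g^~ k ^~ k) _ (b := fun=> 1) _ ag) _.
    by move=> j; rewrite g_diag cmod_real normr1.
  by rewrite !prodr_const card_ord expr1n lerDl exprDn_sub_ge0.
- apply: le_trans (cmod_prod_sub_le (a := a^~ k ^~ h) (g := g^~ k ^~ h) _ (b := fun=> mu) _ ag) _.
    by move=> j; apply: g_offdiag.
  by rewrite !prodr_const card_ord.
Qed.

Lemma gram_prod_sub_delta_le k h :
  cmod (\prod_(j < d) g j k h - (k == h)%:R) <= mu ^+ d.
Proof.
have [<-|nkh] := eqVneq k h.
  rewrite (eq_bigr _ (fun j _ => g_diag j k)) prodr_const expr1n subrr.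
  by rewrite cmod_real normr0 exprn_ge0.
rewrite subr0; apply: le_trans (cmod_prod_le _ (a := g^~ k ^~ h) (b := fun=> mu) _) _.
  by move=> j; apply: g_offdiag.
by rewrite prodr_const card_ord.
Qed.

End GramProduct.

Section Budget.
Variable R : realType.

Lemma bernoulli_upper (x : R) k :
  0 <= x -> 2 * k%:R * x <= 1 -> (1 + x) ^+ k <= 1 + 2 * k%:R * x.
Proof.
move=> x0; elim: k => [|k IH] small; first by rewrite expr0 mulr0 mul0r addr0.
have small' : 2 * k%:R * x <= 1.
  by apply: le_trans small; rewrite ler_wpM2r // ler_wpM2l // ler_nat.
have := ler_wpM2l (addr_ge0 ler01 x0) (IH small'); rewrite -exprS => le1.
apply: le_trans le1 _; rewrite -natr1 in small *.
have := ler0n R k; nra.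
Qed.

Lemma exprD_sub_le (mu del : R) k : 0 < mu -> 0 <= del -> 2 * k%:R * del <= mu ->
  (mu + del) ^+ k - mu ^+ k <= 2 * k%:R * del * mu ^+ k.-1.
Proof.
move=> mu_gt0 del_ge0; case: k => [|k] small; first by rewrite !expr0 subrr mulr0 !mul0r.
have -> : mu + del = mu * (1 + del / mu) by field; rewrite gt_eqF.
rewrite exprMn.
have small' : 2 * k.+1%:R * (del / mu) <= 1 by rewrite mulrA ler_pdivrMr // mul1r.
have := ler_wpM2l (exprn_ge0 k.+1 (ltW mu_gt0))
  (bernoulli_upper (divr_ge0 del_ge0 (ltW mu_gt0)) small').
have -> : mu ^+ k.+1 * (1 + 2 * k.+1%:R * (del / mu)) = mu ^+ k.+1 + 2 * k.+1%:R * del * mu ^+ k.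
  by rewrite exprS; field; rewrite gt_eqF.
by rewrite /=; lra.
Qed.

Lemma diag_budget_le (eps al : R) d :
  0 < eps < 1 / 2 -> (0 < d)%N -> 1 <= al ->
  (1 + eps / (12 * d%:R * al)) ^+ d - 1 <= eps / 6.
Proof.
move=> /andP[eps_gt0 eps_lt] d_gt0 al_ge1.
have d_ge1 : 1 <= d%:R :> R by rewrite (ler_nat R 1).
set del := eps / (12 * d%:R * al).
have two_d_del : 2 * d%:R * del = eps / al / 6.
  by rewrite /del; field; rewrite !gt_eqF //; lra.
have del_ge0 : 0 <= del by rewrite divr_ge0 ?mulr_ge0 //; lra.
have eps_al : eps / al <= eps by rewrite ler_pdivrMr ?ler_peMr //; lra.
clearbody del.
have small : 2 * d%:R * del <= 1 by rewrite two_d_del; lra.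
have := bernoulli_upper del_ge0 small; rewrite two_d_del; lra.
Qed.

Lemma offdiag_budget_le (eps mu al : R) d r :
  0 < eps < 1 / 2 -> (0 < d)%N -> 1 <= al -> al ^+ d = r%:R ->
  0 <= mu -> 2 * r%:R * mu ^+ d.-1 < 1 ->
  r%:R * ((mu + eps / (12 * d%:R * al)) ^+ d - mu ^+ d) <= eps / 4.
Proof.
move=> /andP[eps_gt0 eps_lt] d_gt0 al_ge1 al_root mu_ge0 coh.
set del := eps / (12 * d%:R * al).
have d_ge1 : 1 <= d%:R :> R by rewrite (ler_nat R 1).
have d_del : d%:R * del * al = eps / 12.
  by rewrite /del; field; rewrite !gt_eqF //; lra.
have del_gt0 : 0 < del by apply: divr_gt0 => //; rewrite !mulr_gt0 //; lra.
clearbody del.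
have [large|small] := lerP (2 * d%:R * del) mu.
- have mu_gt0 : 0 < mu by apply: lt_le_trans large; rewrite !mulr_gt0 //; lra.
  apply: le_trans (ler_wpM2l (ler0n _ _) (exprD_sub_le mu_gt0 (ltW del_gt0) large)) _.
  have d_del_le : d%:R * del <= eps / 12.
    by rewrite -d_del ler_peMr // mulr_ge0 ?ler0n // ltW.
  have := ler_wpM2l (ltW (mulr_gt0 (lt_le_trans ltr01 d_ge1) del_gt0)) (ltW coh).
  lra.
- have del_le : del <= d%:R * del by rewrite ler_peMl // ltW.
  have pow_le : (mu + del) ^+ d <= (3 * (d%:R * del)) ^+ d.
    by rewrite lerXn2r ?nnegrE ?addr_ge0 ?mulr_ge0 ?ler0n //; try lra; apply: ltW.
  have r_pow : r%:R * (3 * (d%:R * del)) ^+ d = (eps / 4) ^+ d.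
    by rewrite -al_root -exprMn mulrC -mulrA d_del; congr (_ ^+ _); field.
  have := ler_wpM2l (ler0n _ r) pow_le; rewrite r_pow.
  have q_le : (eps / 4) ^+ d <= eps / 4 by apply: ler_iXnr => //; lra.
  have := mulr_ge0 (ler0n _ r) (exprn_ge0 d mu_ge0).
  rewrite mulrBr; lra.
Qed.

Lemma coherence_budget_le (mu : R) d r : (2 <= d)%N -> (0 < r)%N -> 0 <= mu ->
  2 * r%:R * mu ^+ d.-1 < 1 -> r%:R * mu ^+ d <= 1 / 2.
Proof.
move=> d_ge2 r_gt0 mu_ge0 coh.
have r_ge1 : 1 <= r%:R :> R by rewrite (ler_nat R 1).
have mu_le1 : mu <= 1.
  rewrite leNgt; apply/negP => mu_gt1.
  have pow_ge1 : 1 <= mu ^+ d.-1 by rewrite exprn_ege1 // ltW.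
  have := ler_pM ler01 ler01 r_ge1 pow_ge1; lra.
have pow_le : mu ^+ d <= mu ^+ d.-1.
  by rewrite -{1}(prednK (ltnW d_ge2)) exprS ler_piMl // exprn_ge0.
have := ler_wpM2l (ler0n _ r) pow_le; lra.
Qed.

End Budget.

Section Coherence.
Variable R : realType.
Variables (d r : nat) (n : 'I_d -> nat) (y : 'I_r -> forall l : 'I_d, 'cV[R[i]]_(n l)).

Lemma coherence_ge0 : 0 <= coherence y.
Proof. exact: bigmax_ge_id. Qed.

Lemma cmod_vdot_le_coherence j k h : k != h -> cmod (vdot (y k j) (y h j)) <= coherence y.
Proof.
move=> nkh; apply: le_trans (le_bigmax _ _ j); apply: le_trans (le_bigmax _ _ k).
by apply: (le_bigmax_cond _ (P := fun h => h != k)); rewrite eq_sym.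
Qed.

Hypothesis coh : coherence y ^+ d.-1 < 1 / (2 * r%:R).

(* For r = 0 the right-hand side [1 / (2 * 0)] is 0, so [coh] cannot hold. *)
Lemma coherence_card_gt0 : (0 < r)%N.
Proof.
rewrite lt0n; apply/negP => /eqP r0; move: coh.
have -> : r%:R = 0 :> R by rewrite r0.
by rewrite mulr0 invr0 mulr0 ltNge exprn_ge0 // coherence_ge0.
Qed.

Lemma coherence_lt_mul : 2 * r%:R * coherence y ^+ d.-1 < 1.
Proof.
have r_gt0 : 0 < 2 * r%:R :> R by rewrite mulr_gt0 // ltr0n coherence_card_gt0.
by rewrite mulrC -ltr_pdivlMr.
Qed.

End Coherence.

Section Distortion.
Variable R : realType.
Variables (d r : nat) (n m : 'I_d -> nat) (y : 'I_r -> forall l : 'I_d, 'cV[R[i]]_(n l)).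
Variable c : 'I_r -> R[i].
Hypothesis y_unit : forall k l, vsqnorm (y k l) = 1.
Local Notation mu := (coherence y).
Local Notation Y := (lincomb (fun k => outer (y k)) c).

Let gram_diag j k : vdot (y k j) (y k j) = 1.
Proof. by rewrite -vsqnormC y_unit. Qed.

Lemma tsqnorm_lincomb_ge : (1 - r%:R * mu ^+ d) * coef_sqnorm c <= tsqnorm Y.
Proof.
have err : cmod (hermitian_form c (fun k h => \prod_(j < d) vdot (y k j) (y h j))
    - (coef_sqnorm c)%:C) <= (0 + r%:R * mu ^+ d) * coef_sqnorm c.
  rewrite -hermitian_form_delta.
  apply: hermitian_form_sub_le (exprn_ge0 _ (coherence_ge0 y)) _ => k h.
  rewrite mulr0 add0r.
  apply: (gram_prod_sub_delta_le (g := fun j k h => vdot (y k j) (y h j))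
    (coherence_ge0 y) gram_diag).
  exact: cmod_vdot_le_coherence.
rewrite -tsqnorm_lincomb -rmorphB cmod_real in err.
have := ler_norm (coef_sqnorm c - tsqnorm Y); rewrite distrC; lra.
Qed.

Lemma tsqnorm_mode_prod_sub_le (B : forall j : 'I_d, 'M[R[i]]_(m j, n j)) (del : R) :
  0 <= del ->
  (forall j k h, cmod (vdot (B j *m y k j) (B j *m y h j) - vdot (y k j) (y h j)) <= del) ->
  `|tsqnorm (multi_mode_prod Y B) - tsqnorm Y|
    <= ((1 + del) ^+ d - 1 + r%:R * ((mu + del) ^+ d - mu ^+ d)) * coef_sqnorm c.
Proof.
move=> del_ge0 gram_err.
rewrite multi_mode_prod_lincomb -cmod_real rmorphB /=.
rewrite (tsqnorm_lincomb (fun k j => B j *m y k j)) tsqnorm_lincomb.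
apply: hermitian_form_sub_le (exprDn_sub_ge0 _ (coherence_ge0 y) del_ge0) _ => k h.
apply: (gram_prod_sub_le (a := fun j k h => vdot (B j *m y k j) (B j *m y h j))
  (g := fun j k h => vdot (y k j) (y h j)) del_ge0 (coherence_ge0 y) gram_diag) => //.
exact: cmod_vdot_le_coherence.
Qed.

Lemma lincomb_outer_distortion_le (eps al : R) (B : forall j : 'I_d, 'M[R[i]]_(m j, n j)) :
  0 < eps < 1 / 2 -> (2 <= d)%N -> (0 < r)%N -> 1 <= al -> al ^+ d = r%:R ->
  2 * r%:R * mu ^+ d.-1 < 1 ->
  (forall j k h, cmod (vdot (B j *m y k j) (B j *m y h j) - vdot (y k j) (y h j))
                   <= eps / (12 * d%:R * al)) ->
  `|tsqnorm (multi_mode_prod Y B) - tsqnorm Y| <= eps * tsqnorm Y.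
Proof.
move=> eps_bd d_ge2 r_gt0 al_ge1 al_root coh gram_err.
have [eps_gt0 _] := andP eps_bd.
have d_gt0 := ltnW d_ge2.
have del_ge0 : 0 <= eps / (12 * d%:R * al).
  by rewrite divr_ge0 ?mulr_ge0 ?ler0n //; lra.
have dist := tsqnorm_mode_prod_sub_le del_ge0 gram_err.
have diag := diag_budget_le eps_bd d_gt0 al_ge1.
have off := offdiag_budget_le eps_bd d_gt0 al_ge1 al_root (coherence_ge0 y) coh.
have S_ge0 := coef_sqnorm_ge0 c.
have cohS := ler_wpM2r S_ge0 (coherence_budget_le d_ge2 r_gt0 (coherence_ge0 y) coh).
have low := tsqnorm_lincomb_ge.
have t_ge : coef_sqnorm c / 2 <= tsqnorm Y by lra.
have := ler_wpM2l (ltW eps_gt0) t_ge.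
set del := eps / (12 * d%:R * al) in dist diag off.
have budget : (1 + del) ^+ d - 1 + r%:R * ((mu + del) ^+ d - mu ^+ d) <= eps / 2 by lra.
have := ler_wpM2r S_ge0 budget; lra.
Qed.

End Distortion.

Lemma bernoulli_lower (R : realType) (x : R) k :
  0 <= x -> x <= 1 -> 1 - k%:R * x <= (1 - x) ^+ k.
Proof.
move=> x0 x1; elim: k => [|k IH]; first by rewrite expr0 mul0r subr0.
have := ler_wpM2l (_ : 0 <= 1 - x) IH; rewrite -exprS -natr1.
have := ler0n R k; have := exprn_ge0 k (_ : 0 <= 1 - x).
nra.
Qed.

Lemma nat_root (R : realType) (r d : nat) : (0 < r)%N -> (0 < d)%N ->
  exists al : R, [/\ 1 <= al, al ^+ d = r%:R & al ^+ 2 = r%:R `^ (2 / d%:R)].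
Proof.
move=> r_gt0 d_gt0; exists (r%:R `^ d%:R^-1).
have powE k : (r%:R `^ d%:R^-1) ^+ k = r%:R `^ (k%:R / d%:R) :> R.
  by rewrite -powR_mulrn ?powR_ge0 // -powRrM mulrC.
rewrite !powE mulfV ?pnatr_eq0 -?lt0n // powRr1 ?ler0n //; split => //.
rewrite leNgt; apply/negP => al_lt1.
have := exprn_ilt1 d (powR_ge0 r%:R d%:R^-1) al_lt1; rewrite -lt0n d_gt0 powE.
by rewrite mulfV ?pnatr_eq0 -?lt0n // powRr1 ?ler0n // ltNge ler1n r_gt0.
Qed.

Lemma JL_sample_size (R : realType) (C0 eps eta al : R) d r m :
  0 < C0 -> 0 < eps -> 0 < eta < 1 / 2 -> (0 < d)%N -> (0 < r)%N -> 0 < al ->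
  4608 * C0 * al ^+ 2 * d%:R ^+ 2 * eps ^- 2 * ln (2 * r%:R ^+ 2 * d%:R / eta) <= m%:R ->
  (r * r * 4)%:R <= eta / d%:R * expR ((eps / (48 * d%:R * al)) ^+ 2 * m%:R / C0).
Proof.
move=> C0_gt0 eps_gt0 /andP[eta_gt0 eta_lt] d_gt0 r_gt0 al_gt0 m_large.
have dR : 1 <= d%:R :> R by rewrite (ler_nat R 1).
have rR : 1 <= r%:R :> R by rewrite (ler_nat R 1).
set L := 2 * r%:R ^+ 2 * d%:R / eta in m_large *.
have L_gt0 : 0 < L by rewrite divr_gt0 // !mulr_gt0 // ?exprn_gt0; lra.
set e := eps / (48 * d%:R * al).
have exponent_ge : 2 * ln L <= e ^+ 2 * m%:R / C0.
  have <- : e ^+ 2 * (4608 * C0 * al ^+ 2 * d%:R ^+ 2 * eps ^- 2 * ln L) / C0 = 2 * ln L.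
    by rewrite /e; field; rewrite !gt_eqF //; lra.
  by rewrite ler_pM2r ?invr_gt0 //; apply: ler_wpM2l => //; exact: sqr_ge0.
have expR_ge : L ^+ 2 <= expR (e ^+ 2 * m%:R / C0).
  by rewrite -[L ^+ 2]lnK ?posrE ?exprn_gt0 // ler_expR lnXn // -[ln L *+ 2]mulr_natl.
apply: le_trans (ler_wpM2l (_ : 0 <= eta / d%:R) expR_ge); last first.
  by rewrite divr_ge0 //; lra.
have -> : eta / d%:R * L ^+ 2 = 4 * r%:R ^+ 4 * (d%:R / eta).
  by rewrite /L; field; rewrite !gt_eqF //; lra.
have d_eta : 1 <= d%:R / eta by rewrite ler_pdivlMr //; lra.
have r_sq : r%:R ^+ 2 <= r%:R ^+ 4 :> R.
  by rewrite (_ : 4%N = 2 * 2)%N // exprM ler_eXnr // exprn_ege1.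
rewrite !natrM -expr2 [X in X <= _]mulrC.
have := exprn_ge0 4 (ler0n R r); nra.
Qed.

Lemma optimal_gram_event (R : realType) (C0 eta e : R) (D : mx_family R) m n r
    (y : 'I_r -> 'cV[R[i]]_n) :
  eta_optimal C0 eta D -> 0 < e < 1 -> (m < n)%N -> (0 < r)%N ->
  (forall k, vsqnorm (y k) = 1) ->
  (r * r * 4)%:R <= eta * expR (e ^+ 2 * m%:R / C0) ->
  exists F : set (mxT R m n), [/\ measurable F, ((1 - eta)%:E <= D m n F)%E &
    forall B, F B -> forall k h, cmod (vdot (B *m y k) (B *m y h) - vdot (y k) (y h)) <= 4 * e].
Proof.
move=> opt e_bd mn r_gt0 y_unit size_le.
(* By polarization it suffices to preserve the norms of the vectors [f p]. *)
pose f (p : 'I_r * 'I_r * 'I_4) : 'cV[R[i]]_n := y p.1.1 + 'i ^+ p.2 *: y p.1.2.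
pose S := undup (map f (enum {: 'I_r * 'I_r * 'I_4})).
have S_f p : f p \in S by rewrite mem_undup map_f ?mem_enum.
have S_neq0 : S != [::].
  by apply: contraTneq (S_f (Ordinal r_gt0, Ordinal r_gt0, ord0)) => ->.
have S_size : (size S)%:R <= eta * expR (e ^+ 2 * m%:R / C0).
  apply: le_trans size_le; rewrite ler_nat; apply: leq_trans (size_undup _) _.
  by rewrite size_map -cardT !card_prod !card_ord.
have [F [mF FS DF]] := opt e m n S e_bd mn (undup_uniq _) S_neq0 S_size.
exists F; split => // B FB k h.
by apply: vdot_distortion_le (y_unit k) (y_unit h) => t; apply: FS FB _ (S_f (k, h, t)).
Qed.

Lemma lee_prod_nonneg (R : realType) I (s : seq I) (f g : I -> \bar R) :
  (forall j, (0 <= f j)%E) -> (forall j, (f j <= g j)%E) ->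
  (\prod_(j <- s) f j <= \prod_(j <- s) g j)%E.
Proof.
move=> f0 fg; elim: s => [|x s IH]; first by rewrite !big_nil.
by rewrite !big_cons lee_pmul // prode_ge0.
Qed.

Lemma measurable_all_preimage (R : realType) dO (O : measurableType dO) d
    (m n : 'I_d -> nat) (A : forall j : 'I_d, O -> mxT R (m j) (n j))
    (F : forall j : 'I_d, set (mxT R (m j) (n j))) :
  (forall j, measurable_fun setT (A j)) -> (forall j, measurable (F j)) ->
  measurable [set w | forall j, F j (A j w)].
Proof.
move=> mA mF.
have -> : [set w | forall j, F j (A j w)] = \bigcap_(j in [set: 'I_d]) (A j @^-1` F j).
  by apply/seteqP; split => w /= Fw j; [move=> _ | ]; apply: Fw.
apply: fin_bigcap_measurable finite_finset _ => j _.
by rewrite -[_ @^-1` _]setTI; apply: mA.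
Qed.

Lemma independent_all_ge (R : realType) dO (O : measurableType dO) (P : probability O R) d
    (m n : 'I_d -> nat) (A : forall j : 'I_d, O -> mxT R (m j) (n j))
    (F : forall j : 'I_d, set (mxT R (m j) (n j))) (p : R) :
  mutually_independent P A -> (forall j, measurable (F j)) -> 0 <= p <= 1 ->
  (forall j, ((1 - p)%:E <= P (A j @^-1` F j))%E) ->
  ((1 - d%:R * p)%:E <= P [set w | forall j, F j (A j w)])%E.
Proof.
move=> indep mF /andP[p0 p1] Fp; rewrite (indep F mF).
apply: (@le_trans _ _ (\prod_(j < d) (1 - p)%:E)%E).
  by rewrite prodEFin lee_fin prodr_const card_ord bernoulli_lower.
by apply: lee_prod_nonneg => // j; rewrite lee_fin subr_ge0.
Qed.

Lemma mode_gram_events (R : realType) (C0 eps eta al : R) (D : mx_family R) d r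
    (n m : 'I_d -> nat) (y : 'I_r -> forall l : 'I_d, 'cV[R[i]]_(n l)) :
  0 < C0 -> 0 < eps < 1 / 2 -> 0 < eta < 1 / 2 -> (0 < d)%N -> (0 < r)%N -> 1 <= al ->
  eta_optimal C0 (eta / d%:R) D -> (forall j, (m j < n j)%N) ->
  (forall k l, vsqnorm (y k l) = 1) ->
  (forall j, 4608 * C0 * al ^+ 2 * d%:R ^+ 2 * eps ^- 2
               * ln (2 * r%:R ^+ 2 * d%:R / eta) <= (m j)%:R) ->
  exists F : forall j, set (mxT R (m j) (n j)),
    [/\ forall j, measurable (F j),
        forall j, ((1 - eta / d%:R)%:E <= D (m j) (n j) (F j))%E &
        forall j B, F j B -> forall k h,
          cmod (vdot (B *m y k j) (B *m y h j) - vdot (y k j) (y h j))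
            <= eps / (12 * d%:R * al)].
Proof.
move=> C0_gt0 eps_bd eta_bd d_gt0 r_gt0 al_ge1 opt mn y_unit m_large.
have [eps_gt0 eps_lt] := andP eps_bd.
have dR : 1 <= d%:R :> R by rewrite (ler_nat R 1).
have al_gt0 : 0 < al by lra.
pose e := eps / (48 * d%:R * al).
have e4 : 4 * e = eps / (12 * d%:R * al) by rewrite /e; field; rewrite !gt_eqF //; lra.
have e_bd : 0 < e < 1.
  rewrite divr_gt0 ?mulr_gt0 //=; try lra.
  by rewrite ltr_pdivrMr ?mulr_gt0 //; try lra; nra.
have event j := optimal_gram_event opt e_bd (mn j) r_gt0 (y_unit^~ j)
  (JL_sample_size C0_gt0 eps_gt0 eta_bd d_gt0 r_gt0 al_gt0 (m_large j)).
exists (fun j => projT1 (cid (event j))).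
split=> [j|j|j]; case: (projT2 (cid (event j))) => // _ _ gram B FB k h.
by rewrite -e4; apply: gram.
Qed.

Unset Implicit Arguments.

Theorem corollary2 (R : realType) (C0 : R) :
  0 < C0 ->
  exists Ct : R, 0 < Ct /\
  forall (eps eta : R) (d : nat) (n m : 'I_d -> nat) (r : nat)
    (y : 'I_r -> forall l : 'I_d, 'cV[R[i]]_(n l))
    (D : mx_family R)
    (dO : measure_display) (O : measurableType dO) (P : probability O R)
    (A : forall j : 'I_d, O -> mxT R (m j) (n j)),
    0 < eps < 1 / 2 ->
    0 < eta < 1 / 2 ->
    (2 <= d)%N ->
    (* B is a basis of unit-norm rank-one tensors spanning L *)
    (forall k l, vsqnorm (y k l) = 1) ->
    (forall c : 'I_r -> R[i],
        lincomb (fun k => outer (y k)) c = (fun _ => 0) -> forall k, c k = 0) ->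
    (* modewise coherence condition *)
    coherence y ^+ d.-1 < 1 / (2 * r%:R) ->
    (* embedding dimensions *)
    (forall j, (m j < n j)%N) ->
    (forall j, Ct * r%:R `^ (2 / d%:R) * d%:R ^+ 2 * eps ^- 2
                 * ln (2 * r%:R ^+ 2 * d%:R / eta) <= (m j)%:R) ->
    (* A_j drawn independently from an (eta/d)-optimal family *)
    eta_optimal C0 (eta / d%:R) D ->
    (forall j, measurable_fun setT (A j)) ->
    mutually_independent P A ->
    (forall j (E : set (mxT R (m j) (n j))), measurable E ->
        P (A j @^-1` E) = D (m j) (n j) E) ->
    prob_atleast P
      [set w | forall c : 'I_r -> R[i],
         `| tsqnorm (multi_mode_prod (lincomb (fun k => outer (y k)) c)
                                     (fun j => A j w))
            - tsqnorm (lincomb (fun k => outer (y k)) c) |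
         <= eps * tsqnorm (lincomb (fun k => outer (y k)) c)]
      (1 - eta).
Proof.
(* 4608 = 2 * 48 ^ 2: each mode is embedded with distortion eps / (48 d r^(1/d)). *)
move=> C0_gt0; exists (4608 * C0); split; first lra.
move=> eps eta d n m r y D dO O P A eps_bd eta_bd d_ge2 y_unit _ coh mn m_large opt
  mA indep law.
have r_gt0 := coherence_card_gt0 coh.
have d_gt0 : (0 < d)%N := ltnW d_ge2.
have [al [al_ge1 al_root al_sq]] := nat_root R r_gt0 d_gt0.
have m_large' j : 4608 * C0 * al ^+ 2 * d%:R ^+ 2 * eps ^- 2
    * ln (2 * r%:R ^+ 2 * d%:R / eta) <= (m j)%:R by rewrite al_sq; exact: m_large.
have [F [mF FD Fgram]] :=
  mode_gram_events C0_gt0 eps_bd eta_bd d_gt0 r_gt0 al_ge1 opt mn y_unit m_large'.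
exists [set w | forall j, F j (A j w)]; split.
- exact: measurable_all_preimage mA mF.
- move=> w Fw c.
  apply: (lincomb_outer_distortion_le c y_unit eps_bd d_ge2 r_gt0 al_ge1 al_root).
    exact: coherence_lt_mul.
  by move=> j; apply: Fgram.
- have [eta_gt0 eta_lt] := andP eta_bd; have dR : 1 <= d%:R :> R by rewrite (ler_nat R 1).
  have eta_d : 0 <= eta / d%:R <= 1 by rewrite divr_ge0 ?ler_pdivrMr ?mul1r //=; lra.
  have FP j : ((1 - eta / d%:R)%:E <= P (A j @^-1` F j))%E by rewrite law.
  have := independent_all_ge indep mF eta_d FP.
  by rewrite mulrC divfK // gt_eqF //; lra.
Qed.
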